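(* Let $V$ be an $\mathcal{H}$-module vertex algebra. Set $L_1^{+}V=\sum_{n\ge1}L_1^{(n)}V$ and $L_{-1}^{+}V=\sum_{n\ge1}L_{-1}^{(n)}V$ (both $\mathbb{Z}$-graded subspaces of $V$), and denote by $(\cdot)_0$ their degree-zero parts. Then $(L_{-1}^{+}V)_0\subset (L_1^{+}V)_0$.
   Context: Throughout, $\mathbb{F}$ is an algebraically closed field of odd prime characteristic $p$; vertex algebras are over $\mathbb{F}$. Every vertex algebra $V$ is a module for the bialgebra $\mathcal{B}$ with basis $\{\mathcal{D}^{(n)}\}_{n\in\mathbb{N}}$, $\mathcal{D}^{(m)}\mathcal{D}^{(n)}=\binom{m+n}{n}\mathcal{D}^{(m+n)}$, via $\mathcal{D}^{(n)}v=v_{-n-1}\mathbf{1}$. $\mathcal{H}$: let $\mathfrak{sl}_2$ over $\mathbb{C}$ have basis $L_{-1},L_0,L_1$ with $[L_1,L_{-1}]=2L_0$, $[L_0,L_{\pm1}]=\mp L_{\pm1}$; put $L_{\pm1}^{(n)}=L_{\pm1}^n/n!$, $L_0^{(n)}=\binom{-2L_0}{n}$ in $U(\mathfrak{sl}_2)$; $U(\mathfrak{sl}_2)_{\mathbb{Z}}$ is the $\mathbb{Z}$-span of the $L_{-1}^{(i)}L_0^{(j)}L_1^{(k)}$, and $\mathcal{H}=\mathbb{F}\otimes_{\mathbb{Z}}U(\mathfrak{sl}_2)_{\mathbb{Z}}$. $e^{zL_{\pm1}}=\sum_{n\ge0}z^nL_{\pm1}^{(n)}$. For $v$ homogeneous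 of degree $n$, $f(z)^{\deg}v:=f(z)^nv$, extended linearly. A $\mathbb{Z}$-graded vertex algebra: $V=\bigoplus V_n$, $\mathbf{1}\in V_0$, $u_rV_n\subset V_{m+n-r-1}$ for $u\in V_m$. A $\mathbb{Z}$-graded weight $\mathcal{H}$-module: $W=\bigoplus W_n$ with $\mathcal{H}$-action, $L_{\pm1}^{(r)}W_n\subset W_{n\mp r}$, $L_0^{(r)}|_{W_n}=\binom{-2n}{r}$. An $\mathcal{H}$-module vertex algebra: a $\mathbb{Z}$-graded vertex algebra $V$ which is a $\mathbb{Z}$-graded weight $\mathcal{H}$-module with $L_{-1}^{(n)}=\mathcal{D}^{(n)}$, such that $V_n=0$ for $n\ll0$, $L_1^{(n)}\mathbf{1}=\delta_{n,0}\mathbf{1}$, and $e^{zL_1}Y(v,z_0)e^{-zL_1}=Y\bigl(e^{z(1-zz_0)L_1}(1-zz_0)^{-2\deg}v,z_0/(1-zz_0)\bigr)$ for $v\in V$. *)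

From HB Require Import structures.
From mathcomp Require Import all_boot all_order all_algebra.
Set Implicit Arguments. Unset Strict Implicit. Unset Printing Implicit Defensive.
Import Order.TTheory GRing.Theory Num.Theory.
Local Open Scope ring_scope.

(* Generalized binomial coefficient binom(a, s) for a : int, s : nat,
   i.e. a(a-1)...(a-s+1)/s!, as an integer.  For a = -(k+1) (Negz k):
   binom(-(k+1), s) = (-1)^s C(k+s, s). *)
Definition binz (a : int) (s : nat) : int :=
  match a with
  | Posz n => ('C(n, s))%:Z
  | Negz k => (-1) ^+ s * ('C(k + s, s))%:Z
  end.

Section HModuleVA.
Variables (F : fieldType) (V : lmodType F).
(* one  : the vacuum vector 1
   vop u n w : the component u_n w of Y(u,z)w = sum_n u_n w z^{-n-1}
   pi n : projection of V onto the homogeneous component V_n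
          (so v \in V_n iff pi n v = v)
   L1 r : the action of L_1^{(r)} *)
Variables (one : V) (vop : V -> int -> V -> V) (pi : int -> V -> V)
          (L1 : nat -> V -> V).

(* D^{(n)} v = v_{-n-1} 1 ; this is also the action of L_{-1}^{(n)} *)
Definition Dn (n : nat) (v : V) : V := vop v (- (n%:Z) - 1) one.

Record H_module_VA : Prop := {
  vop_linl : forall (a : F) u u' n w,
      vop (a *: u + u') n w = a *: vop u n w + vop u' n w;
  vop_linr : forall (a : F) u n w w',
      vop u n (a *: w + w') = a *: vop u n w + vop u n w';
  vop_trunc : forall u w, exists N : int, forall n, N <= n -> vop u n w = 0;
  vop_vacuum : forall n v, vop one n v = if n == -1 then v else 0;
  vop_creation : forall v,
      vop v (-1) one = v /\ (forall n : int, 0 <= n -> vop v n one = 0);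
  (* Borcherds (Jacobi) identity in components; sums are finite by
     truncation, so we require equality of all sufficiently long partial
     sums. *)
  vop_borcherds : forall u v w (l m n : int), exists N : nat, forall K : nat,
      (N <= K)%N ->
      \sum_(i < K) (binz m i)%:~R *: vop (vop u (l + i%:Z) v) (m + n - i%:Z) w =
      \sum_(i < K) ((-1) ^+ i * binz l i)%:~R *:
         (vop u (l + m - i%:Z) (vop v (n + i%:Z) w)
          - (-1) ^+ `|l|%N *: vop v (l + n - i%:Z) (vop u (m + i%:Z) w));
  pi_lin : forall n (a : F) u v, pi n (a *: u + v) = a *: pi n u + pi n v;
  pi_orth : forall m n v, pi m (pi n v) = if m == n then pi n v else 0;
  pi_fin : forall v, exists s : seq int,
      [/\ uniq s, v = \sum_(n <- s) pi n v & forall n, n \notin s -> pi n v = 0];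
  one_deg : pi 0 one = one;
  vop_deg : forall u w (m n r : int), pi m u = u -> pi n w = w ->
      pi (m + n - r - 1) (vop u r w) = vop u r w;
  deg_bounded_below : exists N : int, forall n v, n < N -> pi n v = 0;
  L1_lin : forall r (a : F) u v, L1 r (a *: u + v) = a *: L1 r u + L1 r v;
  L1_0 : forall v, L1 0 v = v;
  L1_divpow : forall a b v, L1 a (L1 b v) = ('C(a + b, b))%:R *: L1 (a + b) v;
  D_divpow : forall a b v, Dn a (Dn b v) = ('C(a + b, b))%:R *: Dn (a + b) v;
  L1_deg : forall (n : int) r v, pi n v = v -> pi (n - r%:Z) (L1 r v) = L1 r v;
  D_deg : forall (n : int) r v, pi n v = v -> pi (n + r%:Z) (Dn r v) = Dn r v;
  (* commutation relation of H on the weight space V_n, where L_0^{(r)}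
     acts by binom(-2n, r):
     L_1^{(a)} L_{-1}^{(b)} = sum_j (-1)^j binom(-2n+a-b, j)
                                    L_{-1}^{(b-j)} L_1^{(a-j)} *)
  H_comm : forall (n : int) a b v, pi n v = v ->
      L1 a (Dn b v) =
      \sum_(j < (minn a b).+1)
         ((-1) ^+ j * binz (- 2 * n + a%:Z - b%:Z) j)%:~R *:
            Dn (b - j) (L1 (a - j) v);
  L1_one : forall n, L1 n one = if n == 0%N then one else 0;
  (* e^{zL_1} Y(v,z0) e^{-zL_1} w
       = Y(e^{z(1-z z0)L_1}(1-z z0)^{-2 deg} v, z0/(1-z z0)) w,
     for homogeneous v of degree d, compared coefficientwise at
     z^k z0^{-n-1} (binomials expanded in nonnegative powers of z z0). *)
  L1_conj : forall (d : int) v w (k : nat) (n : int), pi d v = v ->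
      \sum_(i < k.+1) (-1) ^+ (k - i) *: L1 i (vop v n (L1 (k - i) w)) =
      \sum_(s < k.+1) ((-1) ^+ s * binz (k%:Z - 2 * d + n + 1) s)%:~R *:
         vop (L1 (k - s) v) (n + s%:Z) w
}.

Definition in_L1plus (x : V) : Prop :=
  exists s : seq (nat * V),
    all (fun q => (0 < q.1)%N) s /\ x = \sum_(q <- s) L1 q.1 q.2.

Definition in_Lm1plus (x : V) : Prop :=
  exists s : seq (nat * V),
    all (fun q => (0 < q.1)%N) s /\ x = \sum_(q <- s) Dn q.1 q.2.

End HModuleVA.

From HB Require Import structures.
From mathcomp Require Import all_boot all_order all_algebra zify.
Import GRing.Theory.
Local Open Scope ring_scope.
Set Implicit Arguments. Unset Strict Implicit. Unset Printing Implicit Defensive.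

(* Projecting x = \sum_b D^(b) y_b to degree 0 gives x = \sum_b D^(b) v_b with
   v_b of degree -b, so it suffices to put D^(b) v in L_1^+ V for v in V_(-b),
   b >= 1.  The commutation relation applied to L_1^(b) D^(2b) v reads
     L_1^(b) D^(2b) v = (-1)^b D^(b) v + \sum_(j<b) (-1)^j C(b,j) D^(2b-j) L_1^(b-j) v,
   where each D^(2b-j) acts on a vector of degree -(2b-j) < -b.  Hence D^(b) v
   lies in L_1^+ V modulo terms of the same shape in strictly lower degree, and
   since the grading is bounded below this descent terminates. *)

Section L1plus.
Variables (F : fieldType) (V : lmodType F) (L1 : nat -> V -> V).

Lemma in_L1plus0 : in_L1plus L1 0.
Proof. by exists [::]; rewrite big_nil. Qed.

Lemma in_L1plus_L1 r v : (0 < r)%N -> in_L1plus L1 (L1 r v).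
Proof. by move=> r_gt0; exists [:: (r, v)]; rewrite /= r_gt0 big_seq1. Qed.

Lemma in_L1plusD x y : in_L1plus L1 x -> in_L1plus L1 y -> in_L1plus L1 (x + y).
Proof.
move=> [s [s_pos ->]] [t [t_pos ->]]; exists (s ++ t).
by rewrite all_cat s_pos t_pos big_cat.
Qed.

Lemma in_L1plus_sum (I : eqType) (r : seq I) (f : I -> V) :
  (forall i, i \in r -> in_L1plus L1 (f i)) -> in_L1plus L1 (\sum_(i <- r) f i).
Proof.
elim: r => [|i r IHr] f_r; first by rewrite big_nil; apply: in_L1plus0.
rewrite big_cons; apply: in_L1plusD; first by apply: f_r; rewrite mem_head.
by apply: IHr => j j_r; apply: f_r; rewrite inE j_r orbT.
Qed.

Hypothesis L1_linear : forall r, linear (L1 r).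
HB.instance Definition _ r := GRing.isLinear.Build F V V *:%R (L1 r) (L1_linear r).

Lemma in_L1plusZ a x : in_L1plus L1 x -> in_L1plus L1 (a *: x).
Proof.
move=> [s [s_pos ->]]; exists [seq (q.1, a *: q.2) | q <- s].
by rewrite all_map big_map scaler_sumr; split=> //; apply: eq_bigr => q _; rewrite linearZ.
Qed.

Lemma in_L1plusB x y : in_L1plus L1 x -> in_L1plus L1 y -> in_L1plus L1 (x - y).
Proof. by move=> Lx Ly; apply: in_L1plusD => //; rewrite -scaleN1r; apply: in_L1plusZ. Qed.

End L1plus.

Section HModuleVA.
Variables (F : fieldType) (V : lmodType F) (one : V) (vop : V -> int -> V -> V)
  (pi : int -> V -> V) (L1 : nat -> V -> V).
Hypothesis HV : H_module_VA one vop pi L1.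

Local Notation D := (Dn one vop).

Lemma pi_is_linear n : linear (pi n).
Proof. by move=> a u v; rewrite (pi_lin HV). Qed.
HB.instance Definition _ n := GRing.isLinear.Build F V V *:%R (pi n) (pi_is_linear n).

Lemma Dn_is_linear b : linear (D b).
Proof. by move=> a u v; rewrite /Dn (vop_linl HV). Qed.
HB.instance Definition _ b := GRing.isLinear.Build F V V *:%R (D b) (Dn_is_linear b).

Lemma L1_is_linear r : linear (L1 r).
Proof. by move=> a u v; rewrite (L1_lin HV). Qed.

Lemma pi_id n v : pi n (pi n v) = pi n v.
Proof. by rewrite (pi_orth HV) eqxx. Qed.

Lemma pi_homog k n v : pi k v = v -> pi n v = if n == k then v else 0.
Proof. by move=> <-; rewrite (pi_orth HV). Qed.

Lemma pi_Dn n b y : pi n (D b y) = D b (pi (n - b%:Z) y).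
Proof.
have [s [_ -> _]] := pi_fin HV y.
rewrite !linear_sum; apply: eq_bigr => m _ /=.
rewrite (pi_homog n (D_deg HV b (pi_id m y))) (pi_homog (n - b%:Z) (pi_id m y)).
rewrite (_ : (n - b%:Z == m) = (n == m + b%:Z)); last by apply/eqP/eqP; lia.
by case: eqP; rewrite ?linear0.
Qed.

Lemma pi_sum_Dn n (s : seq (nat * V)) :
  pi n (\sum_(q <- s) D q.1 q.2) = \sum_(q <- s) D q.1 (pi (n - q.1%:Z) q.2).
Proof. by rewrite linear_sum; apply: eq_bigr => q _; apply: pi_Dn. Qed.

Lemma L1_Dn_double b v : pi (- b%:Z) v = v ->
  L1 b (D (b + b) v) =
  \sum_(j < b) ((-1) ^+ j * ('C(b, j))%:Z)%:~R *: D (b + b - j) (L1 (b - j) v)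
  + ((-1) ^+ b)%:~R *: D b v.
Proof.
move=> v_deg; rewrite (H_comm HV b (b + b) v_deg).
rewrite (_ : minn b (b + b) = b); last by lia.
rewrite (_ : - 2 * - b%:Z + b%:Z - (b + b)%N%:Z = b); last by lia.
by rewrite big_ord_recr /= binn mulr1 subnn (L1_0 HV) addnK.
Qed.

Lemma Dn_expand b v : pi (- b%:Z) v = v ->
  D b v = ((-1) ^+ b)%:~R *: (L1 b (D (b + b) v)
    - \sum_(j < b) ((-1) ^+ j * ('C(b, j))%:Z)%:~R *: D (b + b - j) (L1 (b - j) v)).
Proof.
move=> v_deg; rewrite (L1_Dn_double v_deg) addrAC subrr add0r scalerA.
by rewrite -intrM -exprMn mulrNN mulr1 expr1n scale1r.
Qed.

Lemma in_L1plus_Dn_homog b v : (0 < b)%N -> pi (- b%:Z) v = v -> in_L1plus L1 (D b v).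
Proof.
have [N pi_below] := deg_bounded_below HV.
(* [m] is fuel for the descent: [v] vanishes once its degree [-b] drops below [N]. *)
suff: forall m : nat, forall b v, (0 < b)%N -> - N < b%:Z + m%:Z ->
    pi (- b%:Z) v = v -> in_L1plus L1 (D b v).
  by move=> descent b_gt0; apply: (descent `|N|%N) => //; lia.
elim=> [|m IHm] {}b {}v b_gt0 b_bound v_deg.
  by rewrite -v_deg pi_below ?linear0; [apply: in_L1plus0 | lia].
rewrite (Dn_expand v_deg); apply: in_L1plusZ; first exact: L1_is_linear.
apply: in_L1plusB; first exact: L1_is_linear.
  by apply: in_L1plus_L1; lia.
apply: in_L1plus_sum => j _; apply: in_L1plusZ; first exact: L1_is_linear.
have j_lt_b := ltn_ord j.
apply: IHm; [lia | lia |].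
rewrite (_ : - (b + b - j)%N%:Z = - b%:Z - (b - j)%N%:Z); last by lia.
exact: (L1_deg HV).
Qed.

End HModuleVA.

Theorem lemma4p9 (F : closedFieldType) (p : nat) (hp : prime p) (hodd : odd p)
    (hchar : p \in [pchar F]) (V : lmodType F) (one : V)
    (vop : V -> int -> V -> V) (pi : int -> V -> V) (L1 : nat -> V -> V)
    (HV : H_module_VA one vop pi L1) :
  forall x : V, pi 0 x = x -> in_Lm1plus one vop x -> in_L1plus L1 x.
Proof.
move=> x x_deg0 [s [s_pos x_def]].
rewrite -x_deg0 x_def (pi_sum_Dn HV); apply: in_L1plus_sum => q q_s.
apply: (in_L1plus_Dn_homog HV); first exact: (allP s_pos).
by rewrite sub0r (pi_id HV).
Qed.
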